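(* Let $\mathcal T$ be a mesh as in the context, $x,y\in\overline\Omega$ and $i\in\{1,\dots,d\}$ with $x_i=y_i$, $x\in\mathrm{Sk}_i$ and $y\notin\mathrm{Sk}_i$. Then there exists a T-junction $T$ with $\mathrm{odir}(T)=i$ and associated cell $Q=\mathrm{ascell}(T)$ such that, with $j=\mathrm{pdir}(T)$, $\overline T\cap\mathrm{conv}\{x,y\}\ne\emptyset$, $x_j\ne y_j$, and $Q_j\cap\mathrm{conv}\{x_j,y_j\}\ne\emptyset$.
   Context: Fix $d\ge2$, integers $N_1,\dots,N_d\ge1$, $\mathbf p\in\mathbb N^d$, $q_k=\lfloor(p_k+1)/2\rfloor$, $\Omega=\prod_{k=1}^d(0,N_k)$, $\mathrm{AR}=\prod_k[q_k,N_k-q_k]$. A mesh $\mathcal T$ is a finite family of pairwise disjoint sets $E=E_1\times\cdots\times E_d$ (entities) with union $\overline\Omega$, each $E_k$ a singleton $\{n\}$, $n\in\{0,\dots,N_k\}$, or an open interval $(a,b)$ with integers $0\le a<b\le N_k$; cells are entities all of whose components are open intervals; the dimension of an entity is its number of interval components. Only meshes arising as follows are considered: start from a tensor-product mesh given by integer grids $0=g^k_0<\dots<g^k_{M_k}=N_k$ (entities: products of grid points and open grid intervals), each containing $0,\dots,q_k$ and $N_k-q_k,\dots,N_k$, and apply finitely many subdivision steps $\mathrm{subdiv}(\mathcal T,Q,j)$: for a cell $Q\subset\mathrm{AR}$ and direction $j$ with $m=\frac12(\inf Q_j+\sup Q_j)$ an integer, let $D=\overline Q$; for each $\ell\ne j$,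 if $\min D_\ell=q_\ell$ replace $D_\ell$ by $D_\ell\cup[0,q_\ell]$, and if $\max D_\ell=N_\ell-q_\ell$ replace $D_\ell$ by $D_\ell\cup[N_\ell-q_\ell,N_\ell]$; replace each entity $E\subset D$ with $E_j=Q_j$ by the three entities with $j$-th component $(\inf Q_j,m)$, $\{m\}$, $(m,\sup Q_j)$. The $i$-orthogonal skeleton is $\mathrm{Sk}_i=\bigcup_{Q\text{ cell}}\{z\in\overline Q: z_i\in\{\inf Q_i,\sup Q_i\}\}$. A T-junction is an entity $T$ of dimension $d-2$, $T\not\subset\partial\Omega$, such that fewer than four entities $F$ of dimension $d-1$ satisfy $T\subset\partial F$. For a T-junction with singleton components $T_i=\{t_i\}$, $T_j=\{t_j\}$ there is a unique cell $Q=\mathrm{ascell}(T)$ with $T\subset\partial Q$, $t_i\in Q_i$ and $t_j\in\{\inf Q_j,\sup Q_j\}$; then $\mathrm{odir}(T)=i$ and $\mathrm{pdir}(T)=j$. $\mathrm{conv}$ denotes convex hull. *)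

From HB Require Import structures.
From mathcomp Require Import all_boot all_order all_algebra.
From mathcomp Require Import reals.
Set Implicit Arguments. Unset Strict Implicit. Unset Printing Implicit Defensive.
Import Order.TTheory GRing.Theory Num.Theory.
Local Open Scope ring_scope.

(* A component E_k of an entity: a singleton {n} or an open interval (a,b). *)
Inductive comp := Pt of nat | Iv of nat & nat.

Definition cinf (c : comp) : nat := match c with Pt n => n | Iv a _ => a end.
Definition csup (c : comp) : nat := match c with Pt n => n | Iv _ b => b end.
Definition is_iv (c : comp) : bool := if c is Iv _ _ then true else false.

Definition ent (d : nat) := {ffun 'I_d -> comp}.
Definition mesh (d : nat) := ent d -> Prop.

Definition edim d (E : ent d) : nat := #|[pred k | is_iv (E k)]|.
Definition is_cell d (E : ent d) : Prop := forall k, is_iv (E k).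

Section Geometry.
Context (R : realType) (d : nat) (N p : 'I_d -> nat).

Definition q (k : 'I_d) : nat := ((p k + 1) %/ 2)%N.

Definition in_comp (c : comp) (r : R) : Prop :=
  match c with Pt n => r = n%:R | Iv a b => a%:R < r < b%:R end.
Definition in_compcl (c : comp) (r : R) : Prop :=
  match c with Pt n => r = n%:R | Iv a b => a%:R <= r <= b%:R end.

Definition mem_ent (E : ent d) (z : 'I_d -> R) : Prop := forall k, in_comp (E k) (z k).
Definition mem_cl (E : ent d) (z : 'I_d -> R) : Prop := forall k, in_compcl (E k) (z k).

Definition in_bdry (T F : ent d) : Prop :=
  forall z, mem_ent T z -> mem_cl F z /\ ~ mem_ent F z.

Definition in_clOmega (z : 'I_d -> R) : Prop := forall k, 0 <= z k <= (N k)%:R.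
Definition on_dOmega (z : 'I_d -> R) : Prop :=
  in_clOmega z /\ exists k, z k = 0 \/ z k = (N k)%:R.

Definition in_AR (z : 'I_d -> R) : Prop :=
  forall k, (q k)%:R <= z k <= (N k)%:R - (q k)%:R.

Definition consec (s : seq nat) (a b : nat) : Prop :=
  exists i, (i.+1 < size s)%N /\ nth 0%N s i = a /\ nth 0%N s i.+1 = b.

Definition grid_ok (g : 'I_d -> seq nat) : Prop :=
  forall k, [/\ sorted ltn (g k), head 1%N (g k) = 0%N, last 0%N (g k) = N k,
    (forall m, (m <= q k)%N -> m \in g k) &
    (forall m, (N k - q k <= m <= N k)%N -> m \in g k)].

Definition tensor_mesh (g : 'I_d -> seq nat) : mesh d := fun E =>
  forall k, (exists n, n \in g k /\ E k = Pt n) \/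
            (exists a b, consec (g k) a b /\ E k = Iv a b).

Definition subdiv_ok (M : mesh d) (Q : ent d) (j : 'I_d) : Prop :=
  [/\ M Q, is_cell Q, (forall z, mem_ent Q z -> in_AR z) &
      ~~ odd (cinf (Q j) + csup (Q j))].

Definition Dlo (Q : ent d) (j l : 'I_d) : nat :=
  if l == j then cinf (Q j)
  else if cinf (Q l) == q l then 0%N else cinf (Q l).
Definition Dhi (Q : ent d) (j l : 'I_d) : nat :=
  if l == j then csup (Q j)
  else if (csup (Q l))%:R == (N l)%:R - (q l)%:R :> R then N l else csup (Q l).

Definition sub_D (Q : ent d) (j : 'I_d) (E : ent d) : Prop :=
  forall z, mem_ent E z -> forall l, (Dlo Q j l)%:R <= z l <= (Dhi Q j l)%:R.

Definition upd (E : ent d) (j : 'I_d) (c : comp) : ent d :=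
  [ffun k => if k == j then c else E k].

Definition subdiv (M : mesh d) (Q : ent d) (j : 'I_d) : mesh d := fun F =>
  let a := cinf (Q j) in let b := csup (Q j) in let m := ((a + b) %/ 2)%N in
  (M F /\ ~ (sub_D Q j F /\ F j = Q j)) \/
  (exists E, [/\ M E, sub_D Q j E, E j = Q j &
     F = upd E j (Iv a m) \/ F = upd E j (Pt m) \/ F = upd E j (Iv m b)]).

Inductive admissible : mesh d -> Prop :=
| adm_tp g : grid_ok g -> admissible (tensor_mesh g)
| adm_sd M Q j : admissible M -> subdiv_ok M Q j -> admissible (subdiv M Q j).

Definition in_Sk (M : mesh d) (i : 'I_d) (z : 'I_d -> R) : Prop :=
  exists Q, [/\ M Q, is_cell Q, mem_cl Q z &
                 z i = (cinf (Q i))%:R \/ z i = (csup (Q i))%:R].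

Definition supports (M : mesh d) (T F : ent d) : Prop :=
  [/\ M F, edim F = (d - 1)%N & in_bdry T F].

Definition tjunction (M : mesh d) (T : ent d) : Prop :=
  [/\ M T, edim T = (d - 2)%N,
      ~ (forall z, mem_ent T z -> on_dOmega z) &
      ~ (exists F1 F2 F3 F4, [/\ F1 <> F2, F1 <> F3 & F1 <> F4] /\
           [/\ F2 <> F3, F2 <> F4 & F3 <> F4] /\
           [/\ supports M T F1, supports M T F2, supports M T F3 &
               supports M T F4])].

(* Q = ascell(T), with odir(T) = i and pdir(T) = j *)
Definition is_ascell (M : mesh d) (T : ent d) (i j : 'I_d) (Q : ent d) : Prop :=
  i != j /\ exists ti tj, [/\ T i = Pt ti, T j = Pt tj, M Q & is_cell Q] /\
     [/\ in_bdry T Q, in_comp (Q i) ti%:R & tj = cinf (Q j) \/ tj = csup (Q j)].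

Definition seg (x y : 'I_d -> R) (t : R) : 'I_d -> R :=
  fun k => (1 - t) * x k + t * y k.

End Geometry.

From Pilot Require Import Defs.
From HB Require Import structures.
From mathcomp Require Import all_boot all_order all_algebra.
From mathcomp Require Import reals boolp classical_sets.
From mathcomp Require Import zify ring lra.
Set Implicit Arguments. Unset Strict Implicit. Unset Printing Implicit Defensive.
Import Order.TTheory GRing.Theory Num.Theory.

(* Admissible meshes keep the invariant [mesh_inv]: entities are disjoint and cover the
   closed box, an entity meeting the closure of a cell lies in that closure, and interval
   components are dyadic pieces of the initial grid intervals; the dyadic structure makes
   the closure property survive subdivision, as two dyadic intervals are nested or
   disjoint.
   Let [ts] be the last time the segment meets the skeleton (attained, since only finitely
   many cells occur) and [Q] a cell having [x_i] as an [i]-endpoint whose closure contains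
   [b = seg ts]. The segment leaves [Q] at [b] through a face orthogonal to some [j <> i];
   let [Q2] be the cell it enters there. If [x_i] is again an [i]-endpoint of [Q2], then
   [Q2] has fewer exit faces at [b] and we recurse. Otherwise [x_i] is interior to [Q2_i],
   and the entity [T] through a generic point of the codimension-2 face of [Q] at [b] is a
   T-junction: a (d-1)-entity around [T] is open in direction [i], on one of the two sides
   of [x_i], or open in direction [j] on the side away from [Q2], so there are at most
   three of them. *)

Section SortedGrid.
Variable s : seq nat.
Hypothesis s_sorted : sorted ltn s.

Lemma sorted_nth_lt i j : (i < j)%N -> (j < size s)%N -> (nth 0 s i < nth 0 s j)%N.
Proof.
move=> lt_ij lt_j; apply: (sorted_ltn_nth ltn_trans 0 s_sorted) => //.
by rewrite inE (ltn_trans lt_ij).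
Qed.

Lemma sorted_nth_le i j : (i <= j)%N -> (j < size s)%N -> (nth 0 s i <= nth 0 s j)%N.
Proof. by rewrite leq_eqVlt => /orP[/eqP -> //|lt_ij] lt_j; exact/ltnW/sorted_nth_lt. Qed.

Lemma consec_lt a b : consec s a b -> (a < b)%N.
Proof. by case=> i [lt_i [<- <-]]; apply: sorted_nth_lt. Qed.

Lemma mem_consec_outside n a b : n \in s -> consec s a b -> (n <= a)%N || (b <= n)%N.
Proof.
move=> sn [i [lt_i [<- <-]]]; rewrite -(nth_index 0 sn).
have := index_mem n s; rewrite sn => lt_n.
case: (leqP (index n s) i) => le_ni.
- by rewrite sorted_nth_le // (ltn_trans _ lt_i).
- by rewrite orbC sorted_nth_le.
Qed.

Lemma consec_overlap_eq a b a' b' : consec s a b -> consec s a' b' ->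
  (a < b')%N -> (a' < b)%N -> a = a' /\ b = b'.
Proof.
move=> [i [lt_i [<- <-]]] [i' [lt_i' [<- <-]]] lt1 lt2.
case: (ltngtP i i') => [lt_ii'|lt_i'i|-> //].
- by have := sorted_nth_le lt_ii' (ltn_trans (ltnSn _) lt_i'); lia.
- by have := sorted_nth_le lt_i'i (ltn_trans (ltnSn _) lt_i); lia.
Qed.

Lemma mem_le_last n : n \in s -> (n <= last 0 s)%N.
Proof.
move=> sn; rewrite -(nth_index 0 sn) -nth_last.
have := index_mem n s; rewrite sn; case e: (size s) => // [k] lt_n.
by apply: sorted_nth_le; rewrite ?e.
Qed.

Lemma consec_le_last a b : consec s a b -> (b <= last 0 s)%N.
Proof. by case=> i [lt_i [_ <-]]; apply/mem_le_last/mem_nth. Qed.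

End SortedGrid.

Local Open Scope ring_scope.

Lemma grid_cover (R : realType) (s : seq nat) (r : R) : sorted ltn s -> s <> [::] ->
  (head 0%N s)%:R <= r -> r <= (last 0%N s)%:R ->
  (exists n, n \in s /\ r = n%:R) \/ (exists a b, consec s a b /\ a%:R < r < b%:R).
Proof.
elim: s => [|x s IH] // s_sorted _ /= le_xr.
case: s IH s_sorted => [|y s] IH s_sorted le_r.
  by left; exists x; rewrite inE eqxx; split=> //; apply/le_anti; rewrite le_xr le_r.
have [lt_xy ys_sorted] : (x < y)%N /\ sorted ltn (y :: s) by case/andP: s_sorted.
case: (ltP r y%:R) => [lt_ry|le_yr].
- case: (eqVneq r x%:R) => [->|ne_rx]; first by left; exists x; rewrite inE eqxx.
  right; exists x, y; split; first by exists 0%N.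
  by rewrite lt_ry andbT lt_neqAle eq_sym ne_rx le_xr.
- have ys_nil : y :: s <> [::] by [].
  have [[n [sn ->]]|[a [b [[k [lt_k [<- <-]]] r_ab]]]] := IH ys_sorted ys_nil le_yr le_r.
  + by left; exists n; rewrite inE sn orbT.
  + by right; exists (nth 0 (y :: s) k), (nth 0 (y :: s) k.+1); split=> //; exists k.+1.
Qed.

(* [(a, b)] is the [r]-th of the [2 ^ e] equal parts of a grid interval [(g, g + h 2^e)]; *)
(* two such intervals are either nested or disjoint, and a proper one lies in a half.  *)
Definition dyadic (s : seq nat) (a b : nat) : Prop :=
  exists g h e r, [/\ consec s g (g + h * 2 ^ e), a = (g + r * h)%N, b = (a + h)%N,
                      (r < 2 ^ e)%N & (0 < h)%N].

Lemma consec_dyadic s a b : consec s a b -> (a < b)%N -> dyadic s a b.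
Proof.
move=> sab lt_ab; exists a, (b - a)%N, 0%N, 0%N.
by rewrite expn0 muln1 subnKC ?(ltnW lt_ab) //; split=> //; lia.
Qed.

Lemma dyadic_lt s a b : dyadic s a b -> (a < b)%N.
Proof. by case=> g [h [e [r [_ _ -> _ ?]]]]; lia. Qed.

Lemma dyadic_halves s a b : dyadic s a b -> ~~ odd (a + b) ->
  dyadic s a ((a + b) %/ 2) /\ dyadic s ((a + b) %/ 2) b.
Proof.
case=> g [h [e [r [sg -> -> lt_r pos_h]]]] even_ab.
have [h' eh] : exists h', h = (2 * h')%N.
  by exists (h %/ 2)%N; move: (modn2 (g + r * h + (g + r * h + h))); rewrite (negbTE even_ab); lia.
have -> : ((g + r * h + (g + r * h + h)) %/ 2 = g + r * h + h')%N.
  by rewrite eh (_ : _ + _ = 2 * (g + r * (2 * h') + h'))%N ?mulKn //; ring.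
have e2 : (h * 2 ^ e = h' * 2 ^ e.+1)%N by rewrite eh expnS; ring.
split; [exists g, h', e.+1, (2 * r)%N | exists g, h', e.+1, (2 * r).+1];
  rewrite -e2 expnS; split=> //; lia.
Qed.

Lemma dyadic_proper_sub_half s a b a' b' : sorted ltn s -> dyadic s a b -> dyadic s a' b' ->
  (a <= a')%N -> (b' <= b)%N -> (a != a') || (b != b') ->
  (b' <= (a + b) %/ 2)%N \/ ((a + b) %/ 2 <= a')%N.
Proof.
move=> s_sorted dab dab' le_aa' le_b'b ne.
have lt_ab := dyadic_lt dab; have lt_ab' := dyadic_lt dab'.
case: dab => g [h [e [r [sg ea eb lt_r pos_h]]]].
case: dab' => k [h' [f [r' [sk ea' eb' lt_r' pos_h']]]].
have bnd1 : (r * h + h <= h * 2 ^ e)%N by nia.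
have bnd2 : (r' * h' + h' <= h' * 2 ^ f)%N by nia.
have [egk ee] := consec_overlap_eq s_sorted sg sk ltac:(lia) ltac:(lia).
subst k; have {}ee : (h * 2 ^ e = h' * 2 ^ f)%N by lia.
have lt_hh' : (h' < h)%N by move: ne; rewrite ea eb ea' eb'; case: (ltngtP h' h); lia.
have lt_ef : (e < f)%N.
  case: (ltnP e f) => // le_fe; have : (2 ^ f <= 2 ^ e)%N by rewrite leq_exp2l.
  nia.
set H := (h' * 2 ^ (f - e.+1))%N.
have eh : h = (2 * H)%N.
  have ef : (2 ^ f = 2 ^ (f - e.+1) * 2 ^ e.+1)%N by rewrite -expnD subnK.
  by apply/eqP; rewrite -(eqn_pmul2r (expn_gt0 2 e)) ee ef expnS /H; apply/eqP; ring.
have -> : ((a + b) %/ 2 = g + (2 * r + 1) * H)%N.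
  by rewrite eb ea eh (_ : _ + _ = 2 * (g + (2 * r + 1) * H))%N ?mulKn //; ring.
rewrite eb' ea' /H; case: (ltnP r' ((2 * r + 1) * 2 ^ (f - e.+1))) => cmp; [left|right].
- have : (r'.+1 * h' <= (2 * r + 1) * 2 ^ (f - e.+1) * h')%N by rewrite leq_mul2r cmp orbT.
  nia.
- have : ((2 * r + 1) * 2 ^ (f - e.+1) * h' <= r' * h')%N by rewrite leq_mul2r cmp orbT.
  nia.
Qed.

Lemma natr_inj {R : numDomainType} (m n : nat) : m%:R = n%:R :> R -> m = n.
Proof. by move/eqP; rewrite eqr_nat => /eqP. Qed.

Definition comp_valid (n : nat) (c : Defs.comp) : bool :=
  match c with Pt m => (m <= n)%N | Iv a b => (a < b <= n)%N end.

Lemma comp_valid_le n n' c : (n <= n')%N -> comp_valid n c -> comp_valid n' c.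
Proof. by case: c => [m|a b] /=; lia. Qed.

Lemma comp_valid_csup n c : comp_valid n c -> (csup c <= n)%N.
Proof. by case: c => //= a b /andP[]. Qed.

Definition comp_sub_cl (c c' : Defs.comp) : bool :=
  match c, c' with
  | Pt n, Pt m => n == m
  | Pt n, Iv a b => (a <= n <= b)%N
  | Iv _ _, Pt _ => false
  | Iv a b, Iv a' b' => (a' <= a)%N && (b <= b')%N
  end.

Definition comp_meets_cl (c c' : Defs.comp) : bool :=
  match c, c' with
  | Pt n, Pt m => n == m
  | Pt n, Iv a b => (a <= n <= b)%N
  | Iv a b, Pt m => (a < m < b)%N
  | Iv a b, Iv a' b' => (a < b')%N && (a' < b)%N
  end.

Definition comp_meets (c c' : Defs.comp) : bool :=
  match c, c' with
  | Pt n, Pt m => n == m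
  | Pt n, Iv a b | Iv a b, Pt n => (a < n < b)%N
  | Iv a b, Iv a' b' => (a < b')%N && (a' < b)%N
  end.

Lemma comp_meetsC : commutative comp_meets.
Proof. by case=> [?|? ?] [?|? ?] //=; rewrite 1?eq_sym 1?andbC. Qed.

Lemma cell_bounds d (Q : ent d) k : is_cell Q -> Q k = Iv (cinf (Q k)) (csup (Q k)).
Proof. by move/(_ k); case: (Q k). Qed.

Lemma comp_sub_cl_bounds c c' : comp_sub_cl c c' -> (cinf c' <= cinf c)%N /\ (csup c <= csup c')%N.
Proof. by case: c => [n|a b]; case: c' => [n'|a' b'] //= h; lia. Qed.

Section ComponentsReal.
Variable R : realType.
Implicit Types (c : Defs.comp) (r : R).

Lemma in_comp_cl c r : in_comp c r -> in_compcl c r.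
Proof. by case: c => [n|a b] //= /andP[? ?]; rewrite !ltW. Qed.

Lemma in_comp_bounds c r : in_comp c r -> (cinf c)%:R <= r <= (csup c)%:R.
Proof. by move/in_comp_cl; case: c => [n|a b] //= ->; rewrite lexx. Qed.

Lemma comp_meets_of_mem c c' r : in_comp c r -> in_comp c' r -> comp_meets c c'.
Proof.
case: c => [n|a b]; case: c' => [n'|a' b'] /=; rewrite -?(ltr_nat R).
- by move=> -> /natr_inj ->.
- by move=> -> /andP[-> ->].
- by move=> /andP[? ?] e; subst r; apply/andP.
- by move=> /andP[? ?] /andP[? ?]; apply/andP; split; lra.
Qed.

Lemma comp_meets_cl_of_mem c c' r : in_comp c r -> in_compcl c' r -> comp_meets_cl c c'.
Proof.
case: c => [n|a b]; case: c' => [n'|a' b'] /=; rewrite -?(ltr_nat R) -?(ler_nat R).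
- by move=> -> /natr_inj ->.
- by move=> -> /andP[-> ->].
- by move=> /andP[? ?] e; subst r; apply/andP.
- by move=> /andP[? ?] /andP[? ?]; apply/andP; split; lra.
Qed.

Lemma comp_sub_cl_mem c c' r : comp_sub_cl c c' -> in_comp c r -> in_compcl c' r.
Proof.
case: c => [n|a b]; case: c' => [n'|a' b'] //=; rewrite -?(ler_nat R).
- by move=> /eqP -> ->.
- by move=> /andP[? ?] e; subst r; apply/andP.
- by move=> /andP[? ?] /andP[? ?]; apply/andP; split; lra.
Qed.

Lemma comp_sub_cl_endpoint c (lo hi : nat) r : r = lo%:R \/ r = hi%:R ->
  comp_sub_cl c (Iv lo hi) -> in_comp c r -> exists2 n, c = Pt n & r = n%:R.
Proof.
case: c => [n|a b] /=; first by move=> _ _ ->; exists n.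
rewrite -!(ler_nat R) => r_end /andP[lo_a b_hi] /andP[a_r r_b].
by exfalso; case: r_end => e; lra.
Qed.

End ComponentsReal.

Section Invariant.
Variables (R : realType) (d : nat) (N : 'I_d -> nat).

(* [g] is the grid of the initial tensor-product mesh. *)
Record mesh_inv (g : 'I_d -> seq nat) (M : mesh d) : Prop := MeshInv {
  inv_sorted : forall k, sorted ltn (g k);
  inv_valid : forall E k, M E -> comp_valid (N k) (E k);
  inv_disjoint : forall E E', M E -> M E' -> (forall k, comp_meets (E k) (E' k)) -> E = E';
  inv_cover : forall z : 'I_d -> R, in_clOmega N z -> exists E, M E /\ mem_ent E z;
  inv_cell_closed : forall Q S, M Q -> is_cell Q -> M S ->
    (forall k, comp_meets_cl (S k) (Q k)) -> forall k, comp_sub_cl (S k) (Q k);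
  inv_dyadic : forall E k a b, M E -> E k = Iv a b -> dyadic (g k) a b }.

Lemma inv_comp_within g M E k (r : R) : mesh_inv g M -> M E -> in_comp (E k) r ->
  0 <= r <= (N k)%:R.
Proof.
move=> M_inv ME /in_comp_bounds/andP[lo hi].
rewrite (le_trans (ler0n _ _) lo) (le_trans hi) // ler_nat.
exact: comp_valid_csup (inv_valid M_inv k ME).
Qed.

End Invariant.

Section TensorMesh.
Variables (R : realType) (d : nat) (N p : 'I_d -> nat) (g : 'I_d -> seq nat).
Hypothesis g_ok : grid_ok N p g.

Let g_sorted k : sorted ltn (g k). Proof. by case: (g_ok k). Qed.

Lemma tensor_mesh_valid E k : tensor_mesh g E -> comp_valid (N k) (E k).
Proof.
have [_ _ <- _ _] := g_ok k.
case/(_ k) => [[n [gn ->]]|[a [b [gab ->]]]] /=; first exact: mem_le_last.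
by rewrite (consec_lt (g_sorted k) gab) (consec_le_last (g_sorted k) gab).
Qed.

Lemma tensor_mesh_disjoint E E' : tensor_mesh g E -> tensor_mesh g E' ->
  (forall k, comp_meets (E k) (E' k)) -> E = E'.
Proof.
move=> gE gE' EE'; apply/ffunP => k; move: (EE' k).
case: (gE k) => [[n [gn ->]]|[a [b [gab ->]]]];
  case: (gE' k) => [[n' [gn' ->]]|[a' [b' [gab' ->]]]] //=.
- by move/eqP ->.
- by have := mem_consec_outside (g_sorted k) gn gab'; lia.
- by have := mem_consec_outside (g_sorted k) gn' gab; lia.
- by case/andP=> lt1 lt2; have [-> ->] := consec_overlap_eq (g_sorted k) gab gab' lt1 lt2.
Qed.

Lemma tensor_mesh_cover (z : 'I_d -> R) : in_clOmega N z ->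
  exists E, tensor_mesh g E /\ mem_ent E z.
Proof.
move=> z_in.
have comp_of k : exists c, ((exists n, n \in g k /\ c = Pt n) \/
    (exists a b, consec (g k) a b /\ c = Iv a b)) /\ in_comp c (z k).
  have [_ g0 gN _ _] := g_ok k.
  have g_nil : g k <> [::] by move=> e; rewrite e in g0.
  have /andP[z0 zN] := z_in k.
  have head0 : head 0%N (g k) = 0%N by case: (g k) g0 g_nil.
  have := grid_cover (g_sorted k) g_nil (r := z k); rewrite head0 gN.
  case=> // [[n [gn ->]]|[a [b [gab zab]]]].
  + by exists (Pt n); split; [left; exists n|].
  + by exists (Iv a b); split; [right; exists a, b|].
have [c Hc] := fin_all_exists comp_of.
by exists [ffun k => c k]; split=> k; rewrite ffunE; case: (Hc k).
Qed.

Lemma tensor_mesh_cell_closed Q S : tensor_mesh g Q -> is_cell Q -> tensor_mesh g S ->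
  (forall k, comp_meets_cl (S k) (Q k)) -> forall k, comp_sub_cl (S k) (Q k).
Proof.
move=> gQ cQ gS QS k; move: (QS k) (cQ k).
case: (gQ k) => [[n [_ ->]]|[a [b [gab ->]]]] //=.
case: (gS k) => [[n' [_ ->]]|[a' [b' [gab' ->]]]] //= /andP[lt1 lt2] _.
by have [-> ->] := consec_overlap_eq (g_sorted k) gab' gab lt1 lt2; rewrite !leqnn.
Qed.

Lemma tensor_mesh_dyadic E k a b : tensor_mesh g E -> E k = Iv a b -> dyadic (g k) a b.
Proof.
case/(_ k) => [[n [_ ->]]|[a' [b' [gab ->]]]] // [<- <-].
exact: consec_dyadic gab (consec_lt (g_sorted k) gab).
Qed.

Lemma tensor_mesh_inv : mesh_inv R N g (tensor_mesh g).
Proof.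
split; [exact: g_sorted | exact: tensor_mesh_valid | exact: tensor_mesh_disjoint |
  exact: tensor_mesh_cover | exact: tensor_mesh_cell_closed | exact: tensor_mesh_dyadic].
Qed.

End TensorMesh.

Section SubBox.
Variables (R : realType) (d : nat) (N p : 'I_d -> nat) (Q : ent d) (j : 'I_d).

Definition near_cinf (c : Defs.comp) : R :=
  match c with Pt n => n%:R | Iv a _ => a%:R + 2^-1 end.
Definition near_csup (c : Defs.comp) : R :=
  match c with Pt n => n%:R | Iv _ b => b%:R - 2^-1 end.

Lemma in_comp_near n c : comp_valid n c -> in_comp c (near_cinf c) /\ in_comp c (near_csup c).
Proof.
case: c => [k|a b] //= /andP[lt_ab _].
have : a%:R + 1 <= b%:R :> R by rewrite natr1 ler_nat.
by move=> ?; split; apply/andP; split; lra.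
Qed.

Lemma sub_D_bounds (E : ent d) : (forall l, comp_valid (N l) (E l)) ->
  sub_D R N p Q j E <->
  forall l, (Dlo p Q j l <= cinf (E l))%N /\ (csup (E l) <= Dhi R N p Q j l)%N.
Proof.
move=> E_valid; split=> [E_sub l|E_bnd z zE l]; last first.
  have [lo hi] := E_bnd l; have /andP[zlo zhi] := in_comp_bounds (zE l).
  by rewrite (le_trans _ zlo) ?(le_trans zhi) ?ler_nat.
have /andP[lo _] := E_sub _ (fun k => proj1 (in_comp_near (E_valid k))) l.
have /andP[_ hi] := E_sub _ (fun k => proj2 (in_comp_near (E_valid k))) l.
case: (E l) lo hi => [n|a b] /=; rewrite ?ler_nat // => lo hi.
by split; rewrite -ltnS -(ltr_nat R) -natr1; lra.
Qed.

End SubBox.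

Section Halves.
Variables (a m b : nat).
Hypotheses (lt_am : (a < m)%N) (lt_mb : (m < b)%N).

Definition piece (c : Defs.comp) := c = Iv a m \/ c = Pt m \/ c = Iv m b.
Definition half (c : Defs.comp) := c = Iv a m \/ c = Iv m b.

Lemma comp_meets_piece x c : piece c -> comp_meets x c -> comp_meets x (Iv a b).
Proof. by case: x => [n|a' b'] [->|[->|->]] /=; lia. Qed.

Lemma comp_meets_cl_piece x c : piece c -> comp_meets_cl x c -> comp_meets_cl x (Iv a b).
Proof. by case: x => [n|a' b'] [->|[->|->]] /=; lia. Qed.

Lemma piece_meets_cl c x : piece c -> comp_meets_cl c x -> comp_meets_cl (Iv a b) x.
Proof. by case: x => [n|a' b'] [->|[->|->]] /=; lia. Qed.

Lemma piece_sub_cl c x : piece c -> comp_sub_cl (Iv a b) x -> comp_sub_cl c x.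
Proof. by case: x => [n|a' b'] [->|[->|->]] /=; lia. Qed.

Lemma piece_meets_cl_half c c' : half c -> piece c' -> comp_meets_cl c' c -> comp_sub_cl c' c.
Proof. by move=> [->|->] [->|[->|->]] /=; lia. Qed.

Lemma pieces_meet_eq c c' : piece c -> piece c' -> comp_meets c c' -> c = c'.
Proof. by move=> [->|[->|->]] [->|[->|->]] //=; lia. Qed.

Lemma dyadic_sub_cl_half s x c : sorted ltn s -> half c -> ((a + b) %/ 2)%N = m ->
  dyadic s a b -> (forall a' b', x = Iv a' b' -> dyadic s a' b') ->
  comp_sub_cl x (Iv a b) -> x <> Iv a b -> comp_meets_cl x c -> comp_sub_cl x c.
Proof.
move=> s_sorted c_half mid dab x_dyadic; case: x x_dyadic => [n|a' b'] x_dyadic /=.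
  by case: c_half => ->.
move=> /andP[le_aa' le_b'b] ne meet.
have ne' : (a != a') || (b != b').
  by rewrite -negb_and; apply: contra_notN ne => /andP[/eqP <- /eqP <-].
have := dyadic_proper_sub_half s_sorted dab (x_dyadic a' b' erefl) le_aa' le_b'b ne'.
by rewrite mid; case: c_half meet => -> /=; lia.
Qed.

End Halves.

Section Subdivision.
Variables (R : realType) (d : nat) (N p : 'I_d -> nat) (g : 'I_d -> seq nat).
Variables (M : mesh d) (Q : ent d) (j : 'I_d) (a b : nat).
Hypotheses (M_inv : mesh_inv R N g M) (MQ : M Q) (Qj : Q j = Iv a b)
  (even_ab : ~~ odd (a + b)).

Let m := ((a + b) %/ 2)%N.
Let lt_am : (a < m)%N.
Proof.
have := inv_valid M_inv j MQ; have := modn2 (a + b).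
by rewrite Qj /m (negbTE even_ab) /=; lia.
Qed.
Let lt_mb : (m < b)%N.
Proof.
have := inv_valid M_inv j MQ; have := modn2 (a + b).
by rewrite Qj /m (negbTE even_ab) /=; lia.
Qed.

Let in_D (E : ent d) := sub_D R N p Q j E /\ E j = Iv a b.

Lemma subdivP F : subdiv R N p M Q j F <->
  (M F /\ ~ in_D F) \/
  exists E c, [/\ M E, in_D E, piece a m b c & F = upd E j c].
Proof.
rewrite /subdiv Qj /= -/m; split.
- case=> [|[E [ME E_D Ej E_F]]]; [by left | right; exists E].
  by case: E_F => [->|[->|->]]; [exists (Iv a m) | exists (Pt m) | exists (Iv m b)];
    split=> //; rewrite /piece; tauto.
- case=> [|[E [c [ME [E_D Ej] c_piece ->]]]]; [by left | right; exists E; split=> //].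
  by case: c_piece => [->|[->|->]]; tauto.
Qed.

Let updE (E : ent d) c k : upd E j c k = if k == j then c else E k.
Proof. by rewrite ffunE. Qed.

Let E_valid E l : M E -> comp_valid (N l) (E l).
Proof. exact: (inv_valid M_inv). Qed.

Lemma subdiv_valid F k : subdiv R N p M Q j F -> comp_valid (N k) (F k).
Proof.
case/subdivP=> [[MF _]|[E [c [ME _ c_piece ->]]]]; first exact: E_valid.
have := E_valid j MQ; rewrite updE Qj; case: eqP => [->|_]; last by move=> _; exact: E_valid.
by case: c_piece => [->|[->|->]] /=; lia.
Qed.

Lemma subdiv_disjoint F1 F2 : subdiv R N p M Q j F1 -> subdiv R N p M Q j F2 ->
  (forall k, comp_meets (F1 k) (F2 k)) -> F1 = F2.
Proof.
have disj := inv_disjoint M_inv.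
case/subdivP=> [[MF1 nD1]|[E1 [c1 [ME1 E1_D c1_piece ->]]]];
case/subdivP=> [[MF2 nD2]|[E2 [c2 [ME2 E2_D c2_piece ->]]]] => meet.
- exact: disj.
- have E2F1 : F1 = E2.
    apply: disj => // k; have := meet k; rewrite updE; case: eqP => [->|_] //.
    by rewrite E2_D.2; apply: comp_meets_piece c2_piece.
  by case: nD1; rewrite E2F1.
- have E1F2 : F2 = E1.
    apply: disj => // k; have := meet k; rewrite updE comp_meetsC; case: eqP => [->|_] //.
    by rewrite E1_D.2; apply: comp_meets_piece c1_piece.
  by case: nD2; rewrite E1F2.
- have E12 : E1 = E2.
    apply: disj => // k; have := meet k; rewrite !updE; case: eqP => [->|_] //.
    by rewrite E1_D.2 E2_D.2 /=; lia.
  subst E2; have := meet j; rewrite !updE eqxx => /(pieces_meet_eq lt_am lt_mb c1_piece c2_piece).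
  by move=> ->.
Qed.

Lemma subdiv_cover (z : 'I_d -> R) : in_clOmega N z ->
  exists F, subdiv R N p M Q j F /\ mem_ent F z.
Proof.
move=> z_in; have [E [ME zE]] := inv_cover M_inv z_in.
have [[E_D Ej]|nD] := pselect (in_D E); last by exists E; split=> //; apply/subdivP; left.
have [c [c_piece zc]] : exists c, piece a m b c /\ in_comp c (z j).
  have := zE j; rewrite Ej /= => /andP[az zb].
  case: (ltgtP (z j) m%:R) => zm.
  - by exists (Iv a m); split; [left | rewrite /= az zm].
  - by exists (Iv m b); split; [right; right | rewrite /= zb zm].
  - by exists (Pt m); split; [right; left |].
exists (upd E j c); split; first by apply/subdivP; right; exists E, c.
by move=> k; rewrite updE; case: eqP => [->|_].
Qed.

Lemma subdiv_dyadic F k a' b' : subdiv R N p M Q j F -> F k = Iv a' b' -> dyadic (g k) a' b'.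
Proof.
case/subdivP=> [[MF _]|[E [c [ME [_ Ej] c_piece ->]]]]; first exact: (inv_dyadic M_inv).
rewrite updE; case: eqP => [->|_]; last exact: (inv_dyadic M_inv).
have [dl dr] := dyadic_halves (inv_dyadic M_inv MQ Qj) even_ab.
by case: c_piece => [->|[->|->]] // [<- <-].
Qed.

Let closed := inv_cell_closed M_inv.

Lemma subdiv_cell_closed_old Q' S : M Q' -> is_cell Q' -> subdiv R N p M Q j S ->
  (forall k, comp_meets_cl (S k) (Q' k)) -> forall k, comp_sub_cl (S k) (Q' k).
Proof.
move=> MQ' Q'_cell /subdivP[[MS _]|[E [c [ME [_ Ej] c_piece ->]]]] meet k; first exact: closed.
have EQ' : forall k, comp_sub_cl (E k) (Q' k).
  apply: closed => // l; have := meet l; rewrite updE; case: eqP => [->|_] //.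
  by rewrite Ej; apply: piece_meets_cl c_piece.
rewrite updE; case: eqP => [->|_] //.
by have := EQ' j; rewrite Ej; apply: piece_sub_cl c_piece.
Qed.

Lemma subdiv_cell_closed_new E c S : M E -> in_D E -> piece a m b c ->
  is_cell (upd E j c) -> subdiv R N p M Q j S ->
  (forall k, comp_meets_cl (S k) (upd E j c k)) -> forall k, comp_sub_cl (S k) (upd E j c k).
Proof.
move=> ME [E_D Ej] c_piece Q'_cell S_sub meet.
have c_half : half a m b c.
  by have := Q'_cell j; rewrite updE eqxx; case: c_piece => [->|[->|->]] // _; [left|right].
have E_cell : is_cell E.
  move=> k; case: (eqVneq k j) => [->|ne]; first by rewrite Ej.
  by have := Q'_cell k; rewrite updE (negbTE ne).
case/subdivP: S_sub meet => [[MS nD]|[E2 [c2 [ME2 [_ E2j] c2_piece ->]]]] meet k.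
- have SE : forall k, comp_sub_cl (S k) (E k).
    apply: closed => // l; have := meet l; rewrite updE; case: eqP => [->|_] //.
    by rewrite Ej; apply: comp_meets_cl_piece c_piece.
  rewrite updE; case: eqP => [->|_] //.
  have S_D : sub_D R N p Q j S.
    apply/(sub_D_bounds _ _ _ _ (fun l => E_valid l MS)) => l.
    have [lo hi] := comp_sub_cl_bounds (SE l).
    have /(sub_D_bounds _ _ _ _ (fun l => E_valid l ME)) E_bnd := E_D.
    by have [lo' hi'] := E_bnd l; split; [apply: leq_trans lo | apply: leq_trans hi'].
  apply: (dyadic_sub_cl_half lt_am lt_mb (inv_sorted M_inv j) c_half erefl
           (inv_dyadic M_inv MQ Qj) (fun a' b' => inv_dyadic M_inv (k := j) MS)).
  + by rewrite -Ej.
  + by move=> Sj; apply: nD.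
  + by have := meet j; rewrite updE eqxx.
- have E2E : forall k, comp_sub_cl (E2 k) (E k).
    apply: closed => // l; have := meet l; rewrite !updE; case: eqP => [->|_] //.
    by rewrite Ej E2j /=; lia.
  rewrite !updE; case: eqP => [_|_]; last exact: E2E.
  by apply: piece_meets_cl_half c_half c2_piece _; have := meet j; rewrite !updE eqxx.
Qed.

Lemma subdiv_cell_closed Q' S : subdiv R N p M Q j Q' -> is_cell Q' -> subdiv R N p M Q j S ->
  (forall k, comp_meets_cl (S k) (Q' k)) -> forall k, comp_sub_cl (S k) (Q' k).
Proof.
case/subdivP=> [[MQ' _]|[E [c [ME E_D c_piece ->]]]]; first exact: subdiv_cell_closed_old.
exact: subdiv_cell_closed_new.
Qed.

Lemma subdiv_inv : mesh_inv R N g (subdiv R N p M Q j).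
Proof.
split; [exact: inv_sorted M_inv | exact: subdiv_valid | exact: subdiv_disjoint |
  exact: subdiv_cover | exact: subdiv_cell_closed | exact: subdiv_dyadic].
Qed.

End Subdivision.

Lemma admissible_inv (R : realType) d (N p : 'I_d -> nat) (M : mesh d) :
  admissible R N p M -> exists g, mesh_inv R N g M.
Proof.
elim=> [g g_ok|M' Q j _ [g M'_inv] [MQ Q_cell _ even]]; first by exists g; apply: tensor_mesh_inv.
exists g; have := Q_cell j; case Qj: (Q j) even => [//|a b] /= even _.
exact: subdiv_inv _ M'_inv MQ Qj even.
Qed.

Section HalfIntegers.
Variable R : realType.
Implicit Types (r v : R) (c : Defs.comp) (lo hi n : nat).

Lemma addhalf_gt_nat lo n : (lo%:R < n%:R + 2^-1 :> R) = (lo <= n)%N.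
Proof.
apply/idP/idP => [lt|le]; first by rewrite -ltnS -(ltr_nat R) -natr1; lra.
by move: le; rewrite -(ler_nat R) => ?; lra.
Qed.

Lemma addhalf_lt_nat n hi : (n%:R + 2^-1 < hi%:R :> R) = (n < hi)%N.
Proof.
apply/idP/idP => [lt|lt]; first by rewrite -(ltr_nat R); lra.
by move: lt; rewrite -(ler_nat R) -natr1 => ?; lra.
Qed.

Lemma subhalf_gt_nat lo n : (lo%:R < n%:R - 2^-1 :> R) = (lo < n)%N.
Proof.
apply/idP/idP => [lt|lt]; first by rewrite -(ltr_nat R); lra.
by move: lt; rewrite -(ler_nat R) -natr1 => ?; lra.
Qed.

Lemma subhalf_lt_nat n hi : (n%:R - 2^-1 < hi%:R :> R) = (n <= hi)%N.
Proof.
apply/idP/idP => [lt|le]; first by rewrite -ltnS -(ltr_nat R) -natr1; lra.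
by move: le; rewrite -(ler_nat R) => ?; lra.
Qed.

Definition nonint r := forall n : nat, r <> n%:R.

Lemma nonint_addhalf n : nonint (n%:R + 2^-1).
Proof.
move=> m e; have := addhalf_gt_nat m n; have := addhalf_lt_nat n m.
by rewrite e ltxx; lia.
Qed.

Lemma nonint_subhalf n : nonint (n%:R - 2^-1).
Proof.
move=> m e; have := subhalf_gt_nat m n; have := subhalf_lt_nat n m.
by rewrite e ltxx; lia.
Qed.

Lemma nonint_in_comp_iv c r : nonint r -> in_comp c r -> is_iv c.
Proof. by case: c => [n|a b] // r_nonint /r_nonint. Qed.

Lemma nonint_in_compcl c r : nonint r -> in_compcl c r -> in_comp c r.
Proof.
case: c => [n|a b] /= r_nonint; first by move/r_nonint.
by rewrite !lt_def => /andP[-> ->]; rewrite andbT !andbT; apply/andP; split;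
  apply/eqP => e; [apply: (r_nonint a) | apply: (r_nonint b)].
Qed.

Lemma cl_not_open_end lo hi r : lo%:R <= r <= hi%:R -> ~ (lo%:R < r < hi%:R) ->
  r = lo%:R \/ r = hi%:R.
Proof.
move=> /andP[le_lo le_hi] not_open.
case: (eqVneq r lo%:R) => [|ne_lo]; first by left.
case: (eqVneq r hi%:R) => [|ne_hi]; first by right.
by case: not_open; rewrite !lt_neqAle le_lo le_hi ne_hi eq_sym ne_lo.
Qed.

Definition step_off n v : R := if 0 < v then n%:R + 2^-1 else n%:R - 2^-1.

Lemma nonint_step_off n v : nonint (step_off n v).
Proof. by rewrite /step_off; case: ifP => _; [apply: nonint_addhalf | apply: nonint_subhalf]. Qed.

Lemma step_off_within n m v : (0 < n < m)%N -> 0 <= step_off n v <= m%:R.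
Proof.
move=> /andP[n_gt0 lt_nm].
have n_ge1 : 1 <= n%:R :> R by rewrite ler1n.
have n1_le : n%:R + 1 <= m%:R :> R by rewrite natr1 ler_nat.
by rewrite /step_off; case: ifP => _; apply/andP; split; lra.
Qed.

Lemma step_off_in_iv lo hi n v : lo%:R < step_off n v < hi%:R ->
  [/\ (lo <= n <= hi)%N, 0 < v -> (n < hi)%N & v < 0 -> (lo < n)%N].
Proof.
rewrite /step_off; case: ifP => v_pos.
- rewrite addhalf_gt_nat addhalf_lt_nat => /andP[le lt]; split=> [|//|v_neg]; first lia.
  by have := lt_trans v_neg v_pos; rewrite ltxx.
- rewrite subhalf_gt_nat subhalf_lt_nat => /andP[lt le]; split=> [|v_pos'|//]; first lia.
  by rewrite v_pos' in v_pos.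
Qed.

Lemma step_off_opp_in_iv lo hi n v : (lo < hi)%N -> n = lo \/ n = hi -> v != 0 ->
  ~ (lo%:R < step_off n v < hi%:R) -> lo%:R < step_off n (- v) < hi%:R.
Proof.
rewrite /step_off oppr_gt0 => lt_lohi n_end v_ne0.
case: (ltrgtP v 0) v_ne0 => // _ _ /=;
  rewrite addhalf_gt_nat addhalf_lt_nat subhalf_gt_nat subhalf_lt_nat; case: n_end => ->; lia.
Qed.

Lemma step_toward_step_off lo hi n v s : 0 < s <= 1 -> v != 0 ->
  lo%:R < step_off n v < hi%:R -> n = lo \/ n = hi ->
  exists2 eps, 0 < eps <= s & lo%:R < n%:R + eps * v < hi%:R.
Proof.
move=> /andP[s_gt0 s_le1] v_ne0 /step_off_in_iv[_ up down] n_end.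
pose eps := s / (1 + `|v|).
have eps_gt0 : 0 < eps by rewrite divr_gt0 // ltr_pwDl // normr_ge0.
have eps_u : eps + eps * `|v| = s.
  by rewrite -[X in X + _]mulr1 -mulrDr /eps divfK // gt_eqF // ltr_pwDl // normr_ge0.
exists eps; first by have := mulr_ge0 (ltW eps_gt0) (normr_ge0 v) => ?; apply/andP; split; lra.
case: (ltrgtP v 0) v_ne0 => // v_sgn _.
- have {down}lt_lon := down v_sgn.
  have {n_end} en : n = hi by case: n_end => // e; rewrite e ltnn in lt_lon.
  subst n.
  move: lt_lon eps_u; rewrite -(ler_nat R) -natr1 ltr0_norm // mulrN => ? ?.
  have : eps * v < 0 by rewrite pmulr_rlt0.
  by move=> ?; apply/andP; split; lra.
- have {up}lt_nhi := up v_sgn.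
  have {n_end} en : n = lo by case: n_end => // e; rewrite e ltnn in lt_nhi.
  subst n.
  move: lt_nhi eps_u; rewrite -(ler_nat R) -natr1 gtr0_norm // => ? ?.
  have : 0 < eps * v by rewrite mulr_gt0.
  by move=> ?; apply/andP; split; lra.
Qed.

End HalfIntegers.

Section Tracking.
Variable R : realType.

(* For [b] in the closure of a cell component [(lo, hi)], a point with coordinate [r] *)
(* lies in an entity containing [b] in its closure, which a segment moving along [v]   *)
(* leaves at [b] only if it leaves [(lo, hi)] there.                                   *)
Definition tracks (lo hi : nat) (v b r : R) := forall lo' hi' : nat,
  lo'%:R < r -> r < hi'%:R ->
  [/\ lo'%:R <= b <= hi'%:R, 0 < v -> b < hi%:R -> b < hi'%:R &
      v < 0 -> lo%:R < b -> lo'%:R < b].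

Lemma exists_tracking (lo hi : nat) (v b : R) : (lo < hi)%N -> lo%:R <= b <= hi%:R ->
  exists r, [/\ lo%:R < r < hi%:R, nonint r & tracks lo hi v b r].
Proof.
move=> lt_lohi.
have [[n ->]|b_nonint] := pselect (exists n : nat, b = n%:R); last first.
  have {}b_nonint : nonint b by move=> n e; apply: b_nonint; exists n.
  move=> b_cl; exists b; split=> // [|lo' hi' lt_lo' lt_hi']; last by rewrite !ltW.
  exact: (nonint_in_compcl (c := Iv lo hi) b_nonint).
rewrite !ler_nat => /andP[le_lo le_hi].
have [up|down] := boolP ((n < hi)%N && ((0 < v) || (n == lo))).
- case/andP: up => lt_nhi v_up; exists (n%:R + 2^-1); split=> [||lo' hi'].
  + by rewrite addhalf_gt_nat addhalf_lt_nat le_lo.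
  + exact: nonint_addhalf.
  rewrite addhalf_gt_nat addhalf_lt_nat !ler_nat !ltr_nat => le_lo' lt_hi'.
  split=> [|//|v_neg lt_lon]; first by rewrite le_lo' ltnW.
  by move: v_up; rewrite lt_gtF //= => /eqP en; rewrite en ltnn in lt_lon.
- have lt_lon : (lo < n)%N.
    by rewrite ltn_neqAle le_lo andbT; apply: contraNneq down => <-; rewrite lt_lohi eqxx orbT.
  exists (n%:R - 2^-1); split=> [||lo' hi'].
  + by rewrite subhalf_gt_nat subhalf_lt_nat lt_lon.
  + exact: nonint_subhalf.
  rewrite subhalf_gt_nat subhalf_lt_nat !ler_nat !ltr_nat => lt_lo' le_hi'.
  split=> [|v_pos lt_nhi|//]; first by rewrite ltnW.
  by move: down; rewrite lt_nhi v_pos.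
Qed.

End Tracking.

Section AffineSup.
Variable R : realType.
Implicit Types (S : set R) (a b lo hi : R).

Lemma affine_sup_ge S a b lo : has_sup S ->
  (forall t, S t -> lo <= (1 - t) * a + t * b) -> lo <= (1 - sup S) * a + sup S * b.
Proof.
move=> S_sup lo_le; have [[t0 St0] _] := S_sup.
have le_t0 : t0 <= sup S by apply: sup_upper_bound.
have := lo_le t0 St0; case: (leP 0 (b - a)) => [le_ab|lt_ba] lo_t0.
  have : 0 <= (sup S - t0) * (b - a) by rewrite mulr_ge0 // subr_ge0.
  lra.
have le_sup : sup S <= (a - lo) / (a - b).
  apply: ge_sup; first by exists t0.
  by move=> t /lo_le lo_t; rewrite ler_pdivlMr; lra.
by move: le_sup; rewrite ler_pdivlMr; lra.
Qed.

Lemma affine_sup_le S a b hi : has_sup S ->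
  (forall t, S t -> (1 - t) * a + t * b <= hi) -> (1 - sup S) * a + sup S * b <= hi.
Proof.
move=> S_sup le_hi; have := @affine_sup_ge S (- a) (- b) (- hi) S_sup.
have opp t : (1 - t) * - a + t * - b = - ((1 - t) * a + t * b) by ring.
by rewrite opp lerN2; apply=> t /le_hi; rewrite opp lerN2.
Qed.

End AffineSup.

Section CellCode.
Variables (d B : nat).

(* Cells with endpoints at most [B] form a finite type. *)
Definition cell_code := {ffun 'I_d -> 'I_B.+1 * 'I_B.+1}.

Definition cell_of_code (e : cell_code) : ent d := [ffun k => Iv (e k).1 (e k).2].

Definition code_of_cell (Q : ent d) : cell_code :=
  [ffun k => (inord (cinf (Q k)), inord (csup (Q k)))].

Lemma code_of_cellK Q : is_cell Q -> (forall k, comp_valid B (Q k)) ->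
  cell_of_code (code_of_cell Q) = Q.
Proof.
move=> Q_cell Q_valid; apply/ffunP => k; rewrite !ffunE /=.
by move: (Q_cell k) (Q_valid k); case: (Q k) => // a b _ /= ab; rewrite !inordK //; lia.
Qed.

End CellCode.

Lemma edim_two_points d (E : ent d) (i j : 'I_d) : i != j ->
  (forall k, k != i -> k != j -> is_iv (E k)) ->
  edim E = (d - 2 + is_iv (E i) + is_iv (E j))%N.
Proof.
move=> ne_ij E_iv; rewrite /edim (cardD1 i) (cardD1 j) !inE eq_sym ne_ij /=.
have -> : #|[pred k | [&& k != j, k != i & is_iv (E k)]]| = #|[predC pred2 i j]|.
  apply: eq_card => k; rewrite !inE.
  by case: (eqVneq k i) => [|ki]; case: (eqVneq k j) => [|kj] //=; rewrite E_iv.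
have : (2 + #|[predC pred2 i j]|)%N = d.
  by have := cardC (pred2 i j); rewrite card_ord card2 ne_ij.
by case: (is_iv (E i)); case: (is_iv (E j)) => /=; lia.
Qed.

Section Segment.
Variables (R : realType) (d : nat) (N : 'I_d -> nat) (g : 'I_d -> seq nat) (M : mesh d).
Hypotheses (M_inv : mesh_inv R N g M) (d_ge2 : (2 <= d)%N).
Variables (x y : 'I_d -> R) (i : 'I_d).
Hypotheses (x_in : in_clOmega N x) (y_in : in_clOmega N y) (xy_i : x i = y i).

Definition skeleton_cell (Q : ent d) :=
  [/\ M Q, is_cell Q & x i = (cinf (Q i))%:R \/ x i = (csup (Q i))%:R].

Definition tjunction_on_segment := exists (T Q : ent d) (j : 'I_d),
  [/\ tjunction R N M T, is_ascell R M T i j Q,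
      (exists t : R, 0 <= t <= 1 /\ mem_cl T (seg x y t)),
      x j != y j &
      (exists t : R, 0 <= t <= 1 /\ in_comp (Q j) ((1 - t) * x j + t * y j))].

Lemma seg_i t : seg x y t i = x i.
Proof. by rewrite /seg -xy_i; ring. Qed.

Lemma in_Sk_seg t :
  in_Sk M i (seg x y t) <-> exists2 Q, skeleton_cell Q & mem_cl Q (seg x y t).
Proof.
rewrite /in_Sk seg_i; split=> [[Q [MQ Q_cell Qz Qi]]|[Q [MQ Q_cell Qi] Qz]]; exists Q => //.
Qed.

Let times (Q : ent d) : set R := fun t => 0 <= t <= 1 /\ mem_cl Q (seg x y t).

Lemma times_has_sup Q t0 : times Q t0 -> has_sup (times Q).
Proof. by move=> Qt0; split; [exists t0 | exists 1 => t [/andP[]]]. Qed.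

Lemma times_sup Q t0 : times Q t0 -> times Q (sup (times Q)).
Proof.
move=> Qt0; have Q_sup := times_has_sup Qt0.
have /andP[t0_ge0 _] : 0 <= t0 <= 1 by case: Qt0.
have le_t0 : t0 <= sup (times Q) by apply: sup_upper_bound.
split; first by rewrite (le_trans t0_ge0) //; apply: ge_sup; [exists t0 | move=> t [/andP[]]].
move=> k; have ge := affine_sup_ge (a := x k) (b := y k) Q_sup.
have le := affine_sup_le (a := x k) (b := y k) Q_sup.
rewrite /seg; case Qk: (Q k) => [n|a b] /=.
- by apply/le_anti; rewrite ge ?le // => t [_ /(_ k)]; rewrite Qk /seg => ->.
- by rewrite ge ?le // => t [_ /(_ k)]; rewrite Qk /seg => /andP[].
Qed.

Lemma last_skeleton_time : in_Sk M i x -> ~ in_Sk M i y ->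
  exists ts, [/\ 0 <= ts < 1, exists2 Q, skeleton_cell Q & mem_cl Q (seg x y ts) &
                 forall t, ts < t -> t <= 1 -> ~ in_Sk M i (seg x y t)].
Proof.
move=> x_Sk y_Sk; pose B := (\max_(k < d) N k)%N.
have codeK Q : skeleton_cell Q -> cell_of_code (code_of_cell B Q) = Q.
  case=> MQ Q_cell _; apply: code_of_cellK => // k.
  exact: comp_valid_le (leq_bigmax k) (inv_valid M_inv k MQ).
pose P (e : cell_code d B) :=
  `[< skeleton_cell (cell_of_code e) /\ exists t, times (cell_of_code e) t >].
have P_code Q t : skeleton_cell Q -> times Q t -> P (code_of_cell B Q).
  by move=> Q_sk Qt; apply/asboolP; rewrite codeK //; split=> //; exists t.
have seg0 : seg x y 0 = x by apply/funext => k; rewrite /seg; ring.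
have seg1 : seg x y 1 = y by apply/funext => k; rewrite /seg; ring.
have [Q0 Q0_sk Q0x] : exists2 Q, skeleton_cell Q & mem_cl Q (seg x y 0).
  by apply/in_Sk_seg; rewrite seg0.
have [e /asboolP[e_sk [t1 et1]] e_max] := arg_maxP (fun e => sup (times (cell_of_code e)))
  (P_code Q0 0 Q0_sk (conj (introT andP (conj (lexx 0) ler01)) Q0x)).
have [/andP[ts_ge0 ts_le1] e_ts] := times_sup et1.
exists (sup (times (cell_of_code e))); split.
- rewrite ts_ge0 lt_neqAle ts_le1 andbT; apply/eqP => ts1; apply: y_Sk.
  by rewrite -seg1 -ts1; apply/in_Sk_seg; exists (cell_of_code e).
- by exists (cell_of_code e).
- move=> t lt_tst t_le1 /in_Sk_seg[Q Q_sk Qt].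
  have Q_t : times Q t by split=> //; rewrite t_le1 andbT (le_trans ts_ge0) ?ltW.
  have le_sup := e_max _ (P_code Q t Q_sk Q_t); rewrite /= codeK // in le_sup.
  have t_sup : t <= sup (times Q) by apply: sup_upper_bound (times_has_sup Q_t) _ Q_t.
  by have := lt_le_trans lt_tst (le_trans t_sup le_sup); rewrite ltxx.
Qed.

Section Descent.
Variable ts : R.
Hypotheses (ts_ge0 : 0 <= ts) (ts_lt1 : ts < 1)
  (ts_last : forall t, ts < t -> t <= 1 -> ~ in_Sk M i (seg x y t)).

Local Notation b := (seg x y ts).
Local Notation v k := (y k - x k).

Definition exits (Q : ent d) (k : 'I_d) : bool :=
  ((0 < v k) && (b k == (csup (Q k))%:R)) || ((v k < 0) && (b k == (cinf (Q k))%:R)).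

Lemma seg_after t k : seg x y (ts + t) k = b k + t * v k.
Proof. by rewrite /seg; ring. Qed.

Lemma exists_exit Q : skeleton_cell Q -> mem_cl Q b -> exists j, exits Q j.
Proof.
move=> Q_sk bQ; apply: contrapT => no_exit.
have {}no_exit k : ~~ exits Q k by apply/negP => ex; apply: no_exit; exists k.
case: Q_sk => MQ Q_cell Qi.
have b_bnd k : (cinf (Q k))%:R <= b k <= (csup (Q k))%:R by have := bQ k; rewrite cell_bounds.
pose room k := if 0 < v k then ((csup (Q k))%:R - b k) / v k
               else if v k < 0 then (b k - (cinf (Q k))%:R) / - v k else 1.
have room_gt0 k : 0 < room k.
  have /andP[lo hi] := b_bnd k; move: (no_exit k); rewrite /exits /room.
  case: (ltrgtP (v k) 0) => //= v_sgn; rewrite ?andbT ?orbF => ne.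
  - by rewrite divr_gt0 ?oppr_gt0 // subr_gt0 lt_def ne.
  - by rewrite divr_gt0 // subr_gt0 lt_def eq_sym ne.
pose eps := \big[Order.min/(1 - ts)]_(k < d) room k.
have eps_gt0 : 0 < eps by apply: lt_bigmin => //; rewrite subr_gt0.
have eps_room k : eps <= room k by apply: bigmin_le.
have eps_le : eps <= 1 - ts by apply: bigmin_le_id.
apply: (ts_last (t := ts + eps)); [lra | lra |].
apply/in_Sk_seg; exists Q => // k; rewrite seg_after cell_bounds //=.
have /andP[lo hi] := b_bnd k; have := eps_room k; rewrite /room.
case: (ltrgtP (v k) 0) => v_sgn /=.
- rewrite ler_pdivlMr ?oppr_gt0 // => le.
  have : 0 <= eps * - v k by rewrite mulr_ge0 // ?oppr_ge0 ltW.
  by rewrite mulrN => ?; apply/andP; split; lra.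
- rewrite ler_pdivlMr // => le.
  have : 0 <= eps * v k by rewrite mulr_ge0 // ltW.
  by move=> ?; apply/andP; split; lra.
- by rewrite v_sgn mulr0 addr0 lo hi.
Qed.

Definition exit_set Q := [set k | exits Q k].

Definition proxy (Q : ent d) k (r : R) :=
  [/\ (cinf (Q k))%:R < r < (csup (Q k))%:R, nonint r &
      tracks (cinf (Q k)) (csup (Q k)) (v k) (b k) r].

Lemma v_i : v i = 0.
Proof. by rewrite xy_i subrr. Qed.

(* [Q2] is the cell containing a generic point just past the exit face [j] of [Q]. *)
Section Step.
Variables (Q : ent d) (j : 'I_d) (tj : nat) (rho : 'I_d -> R) (Q2 : ent d).
Hypotheses (Q_sk : skeleton_cell Q) (bQ : mem_cl Q b) (j_exit : exits Q j)
  (bj : b j = tj%:R)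
  (rho_ok : forall k, proxy Q k (rho k))
  (MQ2 : M Q2)
  (wQ2 : mem_ent Q2 (fun k => if k == j then step_off tj (v j) else rho k)).

Let MQ : M Q. Proof. by case: Q_sk. Qed.
Let Q_cell : is_cell Q. Proof. by case: Q_sk. Qed.

Lemma vj_ne0 : v j != 0.
Proof. by apply/eqP => vj0; move: j_exit; rewrite /exits vj0 ltxx. Qed.

Lemma j_ne_i : j != i.
Proof. by apply/eqP => ji; move: vj_ne0; rewrite ji v_i eqxx. Qed.

Lemma tj_face : [/\ 0 < v j -> tj = csup (Q j) & v j < 0 -> tj = cinf (Q j)].
Proof.
split=> [v_pos|v_neg]; move: j_exit; rewrite /exits bj.
- by rewrite v_pos (lt_gtF v_pos) orbF => /eqP/natr_inj.
- by rewrite v_neg (lt_gtF v_neg) => /eqP/natr_inj.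
Qed.

Lemma i_ne_j : i != j.
Proof. by rewrite eq_sym j_ne_i. Qed.

Lemma tj_end : tj = cinf (Q j) \/ tj = csup (Q j).
Proof.
have [pos_face neg_face] := tj_face.
by case: (ltrgtP 0 (v j)) vj_ne0 => // v_sgn _; [right; apply: pos_face | left; apply: neg_face].
Qed.

Lemma Q_rho k : in_comp (Q k) (rho k).
Proof. by rewrite (cell_bounds k Q_cell); case: (rho_ok k). Qed.

Lemma tj_interior : (0 < tj < N j)%N.
Proof.
have yj : y j = tj%:R + (1 - ts) * v j by rewrite -bj /seg; ring.
have /andP[yj0 yjN] := y_in j.
have := inv_valid M_inv j MQ; rewrite cell_bounds //= => /andP[lt_Qj le_Qj].
have [pos_face neg_face] := tj_face.
case: (ltrgtP 0 (v j)) vj_ne0 => // v_sgn _.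
- have pos : 0 < (1 - ts) * v j by rewrite mulr_gt0 // subr_gt0.
  move: lt_Qj le_Qj; rewrite -(pos_face v_sgn) => lt_Qj le_Qj.
  by apply/andP; split; [lia | rewrite -(ltr_nat R); lra].
- have pos : 0 < (1 - ts) * - v j by rewrite mulr_gt0 ?oppr_gt0 // subr_gt0.
  move: lt_Qj le_Qj; rewrite -(neg_face v_sgn) => lt_Qj le_Qj; rewrite mulrN in pos.
  by apply/andP; split; [rewrite -(ltr0n R); lra | lia].
Qed.

Lemma Q2j_step : in_comp (Q2 j) (step_off tj (v j)).
Proof. by have := wQ2 j; rewrite /= eqxx. Qed.

Lemma Q2_rho k : k != j -> in_comp (Q2 k) (rho k).
Proof. by move=> ne; have := wQ2 k; rewrite /= (negbTE ne). Qed.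

Lemma Q2_cell : is_cell Q2.
Proof.
move=> k; have [->|ne] := eqVneq k j.
  by apply: nonint_in_comp_iv Q2j_step; apply: nonint_step_off.
by case: (rho_ok k) => _ rho_nonint _; exact: nonint_in_comp_iv rho_nonint (Q2_rho ne).
Qed.

Lemma b_cl_Q2 : mem_cl Q2 b.
Proof.
move=> k; rewrite (cell_bounds k Q2_cell) /=; have [->|ne] := eqVneq k j.
  have := Q2j_step; rewrite (cell_bounds j Q2_cell) => /step_off_in_iv[bnd _ _].
  by rewrite bj !ler_nat.
have := Q2_rho ne; rewrite (cell_bounds k Q2_cell) => /andP[lo hi].
by case: (rho_ok k) => _ _ /(_ _ _ lo hi)[].
Qed.

Lemma exits_Q2 k : exits Q2 k -> k != j /\ exits Q k.
Proof.
move=> ex2; have ne : k != j.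
  apply/eqP => kj; move: ex2; rewrite kj /exits bj !eqr_nat.
  have := Q2j_step; rewrite (cell_bounds j Q2_cell) => /step_off_in_iv[_ up down].
  case: (ltrgtP 0 (v j)) => //= v_sgn; rewrite ?orbF => /eqP e.
  - by have := up v_sgn; rewrite e ltnn.
  - by have := down v_sgn; rewrite e ltnn.
split=> //; apply: contraTT ex2.
have := Q2_rho ne; rewrite (cell_bounds k Q2_cell) => /andP[lo hi].
have [_ _ /(_ _ _ lo hi)[_ tr_up tr_down]] := rho_ok k.
have := bQ k; rewrite (cell_bounds k Q_cell) => /andP[bk_lo bk_hi].
rewrite /exits; case: (ltrgtP 0 (v k)) => //= v_sgn; rewrite ?orbF => ne_face.
- by rewrite lt_eqF // tr_up // lt_neqAle ne_face bk_hi.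
- by rewrite gt_eqF // tr_down // lt_neqAle eq_sym ne_face bk_lo.
Qed.

Lemma fewer_exits : (#|exit_set Q2| < #|exit_set Q|)%N.
Proof.
have sub : exit_set Q2 \subset exit_set Q :\ j.
  by apply/fintype.subsetP => k; rewrite !inE => /exits_Q2[-> ->].
by rewrite (cardsD1 j (exit_set Q)) inE j_exit add1n ltnS subset_leq_card.
Qed.

Section Junction.
Hypothesis xi_in_Q2 : in_comp (Q2 i) (x i).

Let b' k := if (k == i) || (k == j) then b k else rho k.

Let b'_i : b' i = x i. Proof. by rewrite /b' eqxx seg_i. Qed.
Let b'_j : b' j = tj%:R. Proof. by rewrite /b' eqxx orbT bj. Qed.
Let b'_other k : k != i -> k != j -> b' k = rho k.
Proof. by move=> ki kj; rewrite /b' (negbTE ki) (negbTE kj). Qed.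

Lemma b'_in_clOmega : in_clOmega N b'.
Proof.
move=> k; have [->|ki] := eqVneq k i; first by rewrite b'_i; apply: x_in.
have [->|kj] := eqVneq k j.
  by rewrite b'_j ler0n ler_nat; case/andP: tj_interior => _ /ltnW.
by rewrite b'_other //; apply: inv_comp_within M_inv MQ (Q_rho k).
Qed.

Lemma b'_cl (C : ent d) : mem_cl C b -> (forall k, k != i -> k != j -> in_comp (C k) (rho k)) ->
  mem_cl C b'.
Proof.
move=> bC rhoC k; rewrite /b'; case: ifP => [_|/norP[ki kj]]; first exact: bC.
exact/in_comp_cl/rhoC.
Qed.

Lemma b'_cl_Q : mem_cl Q b'.
Proof. exact: b'_cl bQ (fun k _ _ => Q_rho k). Qed.

Lemma b'_cl_Q2 : mem_cl Q2 b'.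
Proof. exact: b'_cl b_cl_Q2 (fun k _ kj => Q2_rho kj). Qed.

Section JunctionEntity.
Variable T : ent d.
Hypotheses (MT : M T) (b'T : mem_ent T b').

Lemma T_sub_cl C : M C -> is_cell C -> mem_cl C b' -> forall k, comp_sub_cl (T k) (C k).
Proof.
move=> MC C_cell b'C; apply: (inv_cell_closed M_inv) => // k.
exact: comp_meets_cl_of_mem (b'T k) (b'C k).
Qed.

Lemma T_i_point : exists2 ti, T i = Pt ti & x i = ti%:R.
Proof.
case: Q_sk => _ _ /comp_sub_cl_endpoint; apply; last by rewrite -b'_i.
by rewrite -(cell_bounds i Q_cell); exact: (T_sub_cl MQ Q_cell b'_cl_Q i).
Qed.

Lemma T_j_point : T j = Pt tj.
Proof.
have face : tj%:R = (cinf (Q j))%:R :> R \/ tj%:R = (csup (Q j))%:R :> R.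
  by case: tj_end => <-; [left | right].
have sub := T_sub_cl MQ Q_cell b'_cl_Q j; rewrite (cell_bounds j Q_cell) in sub.
have Tj := b'T j; rewrite b'_j in Tj.
by have [n -> /natr_inj ->] := comp_sub_cl_endpoint face sub Tj.
Qed.

Lemma T_rho k : k != i -> k != j -> in_comp (T k) (rho k).
Proof. by move=> ki kj; rewrite -b'_other. Qed.

Lemma T_edim : edim T = (d - 2)%N.
Proof.
have [ti Ti _] := T_i_point.
rewrite (edim_two_points i_ne_j) ?Ti ?T_j_point ?addn0 // => k ki kj.
by have [_ rho_nonint _] := rho_ok k; exact: nonint_in_comp_iv rho_nonint (T_rho ki kj).
Qed.

Lemma T_ne_Q2 : T <> Q2.
Proof. by have [ti Ti _] := T_i_point; move=> TQ2; have := Q2_cell i; rewrite -TQ2 Ti. Qed.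

Lemma tj_end_Q2 : tj = cinf (Q2 j) \/ tj = csup (Q2 j).
Proof.
have := b_cl_Q2 j; rewrite bj (cell_bounds j Q2_cell) => /cl_not_open_end end_Q2.
have [|/natr_inj|/natr_inj] := end_Q2; [|by left|by right].
move=> tj_open; apply: T_ne_Q2; apply: (inv_disjoint M_inv) => // k.
apply: comp_meets_of_mem (b'T k) _.
have [->|ki] := eqVneq k i; first by rewrite b'_i.
have [->|kj] := eqVneq k j; first by rewrite b'_j (cell_bounds j Q2_cell).
by rewrite b'_other //; exact: Q2_rho.
Qed.

Lemma T_bdry_Q2 : in_bdry R T Q2.
Proof.
move=> z zT; split=> [k|zQ2].
  exact: comp_sub_cl_mem (T_sub_cl MQ2 Q2_cell b'_cl_Q2 k) (zT k).
have := zQ2 j; have := zT j; rewrite T_j_point /= => ->; rewrite (cell_bounds j Q2_cell) /=.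
by case: tj_end_Q2 => <-; rewrite ltxx ?andbF.
Qed.

Lemma T_ascell : is_ascell R M T i j Q2.
Proof.
have [ti Ti xi] := T_i_point; split; first exact: i_ne_j.
exists ti, tj; split; first by split=> //; [exact: T_j_point | exact: Q2_cell].
by split; [exact: T_bdry_Q2 | rewrite -xi | exact: tj_end_Q2].
Qed.

Lemma T_not_on_boundary : ~ (forall z : 'I_d -> R, mem_ent T z -> on_dOmega N z).
Proof.
move=> /(_ _ b'T)[_ [k]]; have [->|ki] := eqVneq k i.
  have := inv_valid M_inv i MQ2; rewrite (cell_bounds i Q2_cell) => /andP[_].
  rewrite -(ler_nat R) => le; move: xi_in_Q2; rewrite (cell_bounds i Q2_cell) => /andP[lo hi].
  by rewrite b'_i => -[e|e]; have := ler0n R (cinf (Q2 i)); lra.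
have [->|kj] := eqVneq k j.
  by rewrite b'_j => -[/(@natr_inj R tj 0) e|/natr_inj e]; move: tj_interior; rewrite e ltnn ?andbF.
have [_ rho_nonint _] := rho_ok k.
by rewrite b'_other // => -[/(rho_nonint 0%N)|/rho_nonint].
Qed.

(* Points on the three sides of [T] that a (d-1)-entity around it can occupy; the  *)
(* fourth side, towards [Q2] in direction [j], is taken by [Q2].                    *)
Let z0 k := if k == j then step_off tj (- v j) else b' k.
Let z1 k := if k == i then x i + 2^-1 else b' k.
Let z2 k := if k == i then x i - 2^-1 else b' k.

Section Support.
Variable F : ent d.
Hypothesis F_supp : supports R M T F.

Let MF : M F. Proof. by case: F_supp. Qed.
Let b'F : mem_cl F b' /\ ~ mem_ent F b'. Proof. by case: F_supp => _ _ /(_ _ b'T). Qed.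

Lemma support_rho k : k != i -> k != j -> in_comp (F k) (rho k).
Proof.
move=> ki kj; have [_ rho_nonint _] := rho_ok k.
by apply: nonint_in_compcl rho_nonint _; rewrite -b'_other //; apply: b'F.1.
Qed.

Lemma support_mem z : (forall k, k != i -> k != j -> z k = rho k) ->
  in_comp (F i) (z i) -> in_comp (F j) (z j) -> mem_ent F z.
Proof.
move=> z_rho zi zj k; have [->|ki] := eqVneq k i; first exact: zi.
have [->|kj] := eqVneq k j; first exact: zj.
by rewrite z_rho //; apply: support_rho.
Qed.

Lemma support_iv_xor : is_iv (F i) = ~~ is_iv (F j).
Proof.
have := edim_two_points (E := F) i_ne_j; case: F_supp => _ -> _.
have iv k : k != i -> k != j -> is_iv (F k).
  move=> ki kj; have [_ rho_nonint _] := rho_ok k.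
  exact: nonint_in_comp_iv rho_nonint (support_rho ki kj).
by move/(_ iv); case: (is_iv (F i)); case: (is_iv (F j)) => /=; lia.
Qed.

Lemma support_i_open : is_iv (F i) -> mem_ent F z1 \/ mem_ent F z2.
Proof.
move=> Fi_iv; have Fj_pt : ~~ is_iv (F j) by rewrite -support_iv_xor.
have [b'_clF nb'F] := b'F.
have b'j_F : in_comp (F j) (b' j) by move: (b'_clF j) Fj_pt; case: (F j).
case Fi: (F i) Fi_iv => [//|lo hi] _.
have lt_lohi : (lo < hi)%N by have := inv_valid M_inv i MF; rewrite Fi => /andP[].
have [xi_open|xi_not_open] := pselect (lo%:R < x i < hi%:R).
  by case: nb'F; apply: support_mem b'_other _ b'j_F; rewrite Fi b'_i.
have z1_rho k : k != i -> k != j -> z1 k = rho k.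
  by move=> ki kj; rewrite /z1 (negbTE ki) b'_other.
have z2_rho k : k != i -> k != j -> z2 k = rho k.
  by move=> ki kj; rewrite /z2 (negbTE ki) b'_other.
have := b'_clF i; rewrite Fi b'_i => /cl_not_open_end/(_ xi_not_open)[] e;
  [left; apply: support_mem z1_rho _ _ | right; apply: support_mem z2_rho _ _];
  rewrite /z1 /z2 ?(negbTE j_ne_i) ?eqxx ?Fi ?e //=.
- by rewrite addhalf_gt_nat addhalf_lt_nat leqnn.
- by rewrite subhalf_gt_nat subhalf_lt_nat leqnn andbT.
Qed.

Let w' k := if k == j then step_off tj (v j) else b' k.

Lemma support_j_open : is_iv (F j) -> mem_ent F z0.
Proof.
move=> Fj_iv; have Fi_pt : ~~ is_iv (F i) by rewrite support_iv_xor negbK.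
have [b'_clF nb'F] := b'F.
have b'i_F : in_comp (F i) (b' i) by move: (b'_clF i) Fi_pt; case: (F i).
case Fj: (F j) Fj_iv => [//|lo hi] _.
have lt_lohi : (lo < hi)%N by have := inv_valid M_inv j MF; rewrite Fj => /andP[].
have [tj_open|tj_not_open] := pselect (lo%:R < b' j < hi%:R).
  by case: nb'F; apply: (support_mem b'_other b'i_F); rewrite Fj.
have tj_end : tj = lo \/ tj = hi.
  have := b'_clF j; rewrite Fj => /cl_not_open_end/(_ tj_not_open).
  by rewrite b'_j; case=> /natr_inj; [left | right].
have off_out : ~ (lo%:R < step_off tj (v j) < hi%:R).
  move=> off_in; apply: T_ne_Q2.
  have w'_rho k : k != i -> k != j -> w' k = rho k.
    by move=> ki kj; rewrite /w' (negbTE kj) b'_other.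
  have w'F : mem_ent F w'.
    by apply: (support_mem w'_rho); rewrite /w' ?(negbTE i_ne_j) ?eqxx ?Fj.
  have w'Q2 : mem_ent Q2 w'.
    move=> k; rewrite /w'; have [->|kj] := eqVneq k j; first exact: Q2j_step.
    have [->|ki] := eqVneq k i; first by rewrite b'_i.
    by rewrite b'_other //; apply: Q2_rho.
  have FQ2 : F = Q2.
    by apply: (inv_disjoint M_inv) => // k; exact: comp_meets_of_mem (w'F k) (w'Q2 k).
  by have := Q2_cell i; rewrite -FQ2 (negbTE Fi_pt).
have z0_rho k : k != i -> k != j -> z0 k = rho k.
  by move=> ki kj; rewrite /z0 (negbTE kj) b'_other.
apply: (support_mem z0_rho); rewrite /z0 ?(negbTE i_ne_j) ?eqxx ?Fj //.
exact: step_off_opp_in_iv lt_lohi tj_end vj_ne0 off_out.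
Qed.

Lemma support_witness : exists2 n, (n < 3)%N & mem_ent F (nth z0 [:: z0; z1; z2] n).
Proof.
case Fi: (is_iv (F i)).
  by have [z1F|z2F] := support_i_open Fi; [exists 1%N | exists 2%N].
have Fj : is_iv (F j) by rewrite -[is_iv (F j)]negbK -support_iv_xor Fi.
by exists 0%N => //; apply: support_j_open.
Qed.

End Support.

Lemma T_few_supports : ~ exists F1 F2 F3 F4,
  [/\ F1 <> F2, F1 <> F3 & F1 <> F4] /\ [/\ F2 <> F3, F2 <> F4 & F3 <> F4] /\
  [/\ supports R M T F1, supports R M T F2, supports R M T F3 & supports R M T F4].
Proof.
move=> [F1 [F2 [F3 [F4 [[n12 n13 n14] [[n23 n24 n34] [s1 s2 s3 s4]]]]]]].
have same F F' n : supports R M T F -> supports R M T F' ->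
    mem_ent F (nth z0 [:: z0; z1; z2] n) -> mem_ent F' (nth z0 [:: z0; z1; z2] n) -> F = F'.
  move=> [MF _ _] [MF' _ _] zF zF'; apply: (inv_disjoint M_inv) => // k.
  exact: comp_meets_of_mem (zF k) (zF' k).
have [a1 lt1 m1] := support_witness s1; have [a2 lt2 m2] := support_witness s2.
have [a3 lt3 m3] := support_witness s3; have [a4 lt4 m4] := support_witness s4.
have : a1 = a2 \/ a1 = a3 \/ a1 = a4 \/ a2 = a3 \/ a2 = a4 \/ a3 = a4 by lia.
case=> [e|[e|[e|[e|[e|e]]]]].
- by apply: n12; apply: (same _ _ a1 s1 s2 m1); rewrite e.
- by apply: n13; apply: (same _ _ a1 s1 s3 m1); rewrite e.
- by apply: n14; apply: (same _ _ a1 s1 s4 m1); rewrite e.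
- by apply: n23; apply: (same _ _ a2 s2 s3 m2); rewrite e.
- by apply: n24; apply: (same _ _ a2 s2 s4 m2); rewrite e.
- by apply: n34; apply: (same _ _ a3 s3 s4 m3); rewrite e.
Qed.

Lemma T_tjunction : tjunction R N M T.
Proof.
by split; [exact: MT | exact: T_edim | exact: T_not_on_boundary | exact: T_few_supports].
Qed.

Lemma b_cl_T : mem_cl T b.
Proof.
move=> k; have [->|ki] := eqVneq k i; first by have [ti -> xi] := T_i_point; rewrite seg_i.
have [->|kj] := eqVneq k j; first by rewrite T_j_point bj.
have [_ rho_nonint tr] := rho_ok k.
case: (T k) (T_rho ki kj) => [n /rho_nonint //|lo hi] /= /andP[lo_rho rho_hi].
by have [] := tr _ _ lo_rho rho_hi.
Qed.

Lemma T_conclusion : tjunction_on_segment.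
Proof.
exists T, Q2, j; split.
- exact: T_tjunction.
- exact: T_ascell.
- by exists ts; rewrite ts_ge0 ltW //; split=> //; apply: b_cl_T.
- by apply/eqP => e; move: vj_ne0; rewrite e subrr eqxx.
have := Q2j_step; rewrite (cell_bounds j Q2_cell) => /step_toward_step_off.
have ts1 : 0 < 1 - ts <= 1 by rewrite subr_gt0 ts_lt1 lerBlDr lerDl.
case/(_ _ ts1 vj_ne0 tj_end_Q2) => eps /andP[eps_gt0 eps_le] in_Q2.
exists (ts + eps); split; first by apply/andP; split; lra.
have -> : (1 - (ts + eps)) * x j + (ts + eps) * y j = tj%:R + eps * v j.
  by rewrite -bj /seg; ring.
by rewrite (cell_bounds j Q2_cell).
Qed.

End JunctionEntity.

Lemma junction_conclusion : tjunction_on_segment.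
Proof.
have [T [MT b'T]] := inv_cover M_inv b'_in_clOmega.
exact: T_conclusion MT b'T.
Qed.

End Junction.

Lemma step_dichotomy : tjunction_on_segment \/
  exists2 Q', skeleton_cell Q' /\ mem_cl Q' b & (#|exit_set Q'| < #|exit_set Q|)%N.
Proof.
have [Q2_sk|Q2_nsk] := pselect (skeleton_cell Q2).
  by right; exists Q2; [split=> //; exact: b_cl_Q2 | exact: fewer_exits].
left; apply: junction_conclusion.
have := b_cl_Q2 i; rewrite seg_i (cell_bounds i Q2_cell) => bnd.
apply: contrapT => not_open; apply: Q2_nsk; split=> //; first exact: Q2_cell.
exact: cl_not_open_end bnd not_open.
Qed.

End Step.

Lemma descent Q : skeleton_cell Q -> mem_cl Q b -> tjunction_on_segment \/
  exists2 Q', skeleton_cell Q' /\ mem_cl Q' b & (#|exit_set Q'| < #|exit_set Q|)%N.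
Proof.
move=> Q_sk bQ; have [j j_exit] := exists_exit Q_sk bQ.
have [tj bj] : exists tj, b j = tj%:R.
  by move: j_exit; rewrite /exits => /orP[] /andP[_ /eqP ->]; eexists.
have [MQ Q_cell _] := Q_sk.
have tracking k : exists r, proxy Q k r.
  apply: exists_tracking; last by have := bQ k; rewrite cell_bounds.
  by have := inv_valid M_inv k MQ; rewrite cell_bounds //= => /andP[].
have [rho rho_ok] := fin_all_exists tracking.
pose w k := if k == j then step_off tj (v j) else rho k.
have w_in : in_clOmega N w.
  move=> k; rewrite /w; case: eqP => [->|_].
    exact: step_off_within (tj_interior Q_sk j_exit bj).
  apply: inv_comp_within M_inv MQ _.
  by rewrite cell_bounds //; case: (rho_ok k).
have [Q2 [MQ2 wQ2]] := inv_cover M_inv w_in.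
exact: (step_dichotomy Q_sk bQ j_exit bj rho_ok MQ2 wQ2).
Qed.

Lemma skeleton_cell_tjunction Q : skeleton_cell Q -> mem_cl Q b -> tjunction_on_segment.
Proof.
have [n] := ubnP #|exit_set Q|; elim: n Q => // n IH Q lt_n Q_sk bQ.
have [//|[Q' [Q'_sk bQ'] lt_Q']] := descent Q_sk bQ.
by apply: IH Q'_sk bQ'; apply: leq_trans lt_Q' _.
Qed.

End Descent.

Lemma skeleton_crossing_tjunction : in_Sk M i x -> ~ in_Sk M i y -> tjunction_on_segment.
Proof.
move=> xSk ySk; have [ts [/andP[ts_ge0 ts_lt1] [Q Q_sk bQ] ts_last]] := last_skeleton_time xSk ySk.
exact: (skeleton_cell_tjunction ts_ge0 ts_lt1 ts_last Q_sk bQ).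
Qed.

End Segment.

Theorem lemma2p3 (R : realType) (d : nat) (N p : 'I_d -> nat) (M : mesh d) :
  (2 <= d)%N -> (forall k, (1 <= N k)%N) -> admissible R N p M ->
  forall (x y : 'I_d -> R) (i : 'I_d),
    in_clOmega N x -> in_clOmega N y -> x i = y i ->
    in_Sk M i x -> ~ in_Sk M i y ->
    exists (T Q : ent d) (j : 'I_d),
      [/\ tjunction R N M T, is_ascell R M T i j Q,
          (exists t : R, 0 <= t <= 1 /\ mem_cl T (seg x y t)),
          x j != y j &
          (exists t : R, 0 <= t <= 1 /\ in_comp (Q j) ((1 - t) * x j + t * y j))].
Proof.
move=> d_ge2 _ M_adm x y i x_in y_in xy_i xSk ySk.
have [g M_inv] := admissible_inv M_adm.
exact (skeleton_crossing_tjunction M_inv d_ge2 x_in y_in xy_i xSk ySk).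
Qed.
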